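(* Let $\alpha:[r]\to[m]$ be increasing and $L\in L_m(T_L(\alpha))$. If there exist $n$ and an injective $\beta:[r]\to[n]$ such that $L\,\Pi(\alpha,\beta)=\Pi(\alpha,\beta)$, then $L=I_m$.
   Context: $\mathbb{F}$ is the field with two elements, $[n]=\{1,\dots,n\}$, $e_{n,i}$ standard basis column vectors, $I_m$ identity. For transitive $T\subseteq\{(i,j):i,j\in[m],i>j\}$, $L_m(T)=I_m+\mathrm{span}_{\mathbb{F}}\{e_{m,i}e_{m,j}^{\top}:(i,j)\in T\}$. $T_L(\alpha)=\{(i,j):j\in\mathrm{Im}(\alpha),\ i\in[m],\ i>j\}$. $\Pi(\alpha,\beta)=\sum_{i=1}^re_{m,\alpha(i)}e_{n,\beta(i)}^{\top}$. *)

From HB Require Import structures.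
From mathcomp Require Import all_boot all_order all_algebra.
Set Implicit Arguments. Unset Strict Implicit. Unset Printing Implicit Defensive.
Import GRing.Theory.
Local Open Scope ring_scope.

(* F = 'F_2, the field with two elements.  Indices [m] = {1..m} are
   represented 0-based by 'I_m; e_{m,i} e_{n,j}^T is delta_mx i j. *)

Definition TL (m r : nat) (alpha : 'I_r -> 'I_m) : rel 'I_m :=
  fun i j => (j \in codom alpha) && (j < i)%N.

Definition lower_transitive (m : nat) (T : rel 'I_m) : Prop :=
  (forall i j, T i j -> (j < i)%N) /\ transitive T.

Definition Lm (m : nat) (T : rel 'I_m) : 'M['F_2]_m -> Prop :=
  fun L => exists c : 'I_m -> 'I_m -> 'F_2,
    L = 1%:M + \sum_(i < m) \sum_(j < m | T i j) c i j *: delta_mx i j.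

Definition Pi (m n r : nat) (alpha : 'I_r -> 'I_m) (beta : 'I_r -> 'I_n)
  : 'M['F_2]_(m, n) :=
  \sum_(i < r) delta_mx (alpha i) (beta i).

Definition strictly_increasing (m r : nat) (alpha : 'I_r -> 'I_m) : Prop :=
  forall i j : 'I_r, (i < j)%N -> (alpha i < alpha j)%N.

From HB Require Import structures.
From mathcomp Require Import all_boot all_order all_algebra.
Set Implicit Arguments. Unset Strict Implicit. Unset Printing Implicit Defensive.
Import GRing.Theory.
Local Open Scope ring_scope.

(* Since beta is injective, column beta(k) of Pi(alpha, beta) is the unit
   vector e_{alpha(k)}, so L Pi = Pi says that column alpha(k) of L is that of
   the identity.  Every other column j lies outside Im alpha, so no (i, j) is in
   T_L(alpha) and column j of L is an identity column by the shape of L_m. *)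

Lemma Lm_entry_notin (m : nat) (T : rel 'I_m) (L : 'M['F_2]_m) (i j : 'I_m) :
  Lm T L -> ~~ T i j -> L i j = (i == j)%:R.
Proof.
move=> [c ->] nTij; rewrite !mxE summxE big1 ?addr0 // => i' _.
rewrite summxE big1 // => j' Ti'j'; rewrite !mxE.
have [ei|_] := eqVneq i i'; have [ej|_] := eqVneq j j'; rewrite ?andbF ?mulr0 //.
by rewrite ei ej Ti'j' in nTij.
Qed.

Section PiColumns.

Variables (m n r : nat) (alpha : 'I_r -> 'I_m) (beta : 'I_r -> 'I_n).
Hypothesis beta_inj : injective beta.

Lemma col_Pi (k : 'I_r) : col (beta k) (Pi alpha beta) = delta_mx (alpha k) 0.
Proof.
apply/colP => i; rewrite !mxE summxE (bigD1 k) //= mxE !eqxx andbT.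
rewrite big1 ?addr0 // => k' nk'k.
by rewrite mxE (inj_eq beta_inj) [k == _]eq_sym (negbTE nk'k) andbF.
Qed.

Lemma col_mulmx_Pi (p : nat) (A : 'M['F_2]_(p, m)) (k : 'I_r) :
  col (beta k) (A *m Pi alpha beta) = col (alpha k) A.
Proof. by rewrite colE -mulmxA -colE col_Pi -colE. Qed.

End PiColumns.

Theorem lemma6 (m r : nat) (alpha : 'I_r -> 'I_m) (L : 'M['F_2]_m) :
  strictly_increasing alpha ->
  Lm (TL alpha) L ->
  (exists (n : nat) (beta : 'I_r -> 'I_n),
      injective beta /\ L *m Pi alpha beta = Pi alpha beta) ->
  L = 1%:M.
Proof.
move=> _ L_in [n [beta [beta_inj LPi]]].
apply/matrixP => i j; rewrite mxE.
have [/codomP[k ->]|j_notin] := boolP (j \in codom alpha).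
  have := congr1 (col (beta k)) LPi.
  rewrite col_mulmx_Pi // col_Pi // => /colP/(_ i).
  by rewrite !mxE eqxx andbT.
by rewrite (Lm_entry_notin L_in) // /TL (negbTE j_notin).
Qed.
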